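(* Let $\alpha,\beta$ be compositions with $\beta\subseteq\alpha$, and suppose $\alpha/\beta$ is the disjoint sum of nonempty skew shapes $\alpha^1/\beta^1,\ldots,\alpha^k/\beta^k$, where no two of these components share a row or a column, and $\alpha^i/\beta^i$ lies strictly above $\alpha^{i+1}/\beta^{i+1}$ for $1\le i\le k-1$. Let $n_i=|\alpha^i/\beta^i|$. If for each $i$ the poset $\mathrm{SET}(\alpha^i/\beta^i)$ has a unique minimal element $M_i$, then $\mathrm{SET}(\alpha/\beta)$ has a unique minimal element, namely the tableau whose restriction to the component $\alpha^i/\beta^i$ is obtained from $M_i$ by replacing each entry $a$ with $a+n_1+\cdots+n_{i-1}$.
   Context: Diagrams of compositions have rows numbered from the bottom, row $i$ consisting of columns $1,\ldots,\alpha_i$; for $\beta\subseteq\alpha$ the skew diagram $\alpha/\beta$ consists of the cells in row $i$, column $j$ with $\beta_i<j\le\alpha_i$. $\alpha/\beta$ is a disjoint sum of nonempty sets of cells $A_1,\ldots,A_k$ (each itself a skew shape) if these partition the cells of $\alpha/\beta$ and, for $i\ne j$, the smallest interval containing the row indices of $A_i$ is disjoint from that of $A_j$, and likewise for column indices. $\mathrm{SET}$ of a skew shape with $m$ cells is the set of bijective fillings with $1,\ldots,m$ whose rows increase left to right and columns increase bottom to top. For $1\le i\le m-1$, $\pi_i(T)=T$ if $i+1$ is in a strictly higher row than $i$, $\pi_i(T)=s_i(T)$ (swap $i$ and $i+1$) if $i+1$ is in a strictly lower row than $i$, and $\pi_i(T)=0$ otherwise; the poset order is $T\le T'$ iff $T'$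 is obtained from $T$ by a sequence of operators $\pi_i$ (all intermediate results nonzero). A minimal element is one with no strictly smaller element in $\mathrm{SET}$. *)

From mathcomp Require Import all_boot.
Set Implicit Arguments. Unset Strict Implicit. Unset Printing Implicit Defensive.

(* A cell is (row, column), both 0-indexed: row r here is row r+1 of the
   paper (rows numbered from the bottom), column j here is column j+1. *)
Definition cell := (nat * nat)%type.
(* A filling: value at each cell (0 outside the shape, see is_SET). *)
Definition tableau := cell -> nat.

Definition is_composition (al : seq nat) : bool := all (fun a => 0 < a) al.

Definition subcomp (be al : seq nat) : bool :=
  (size be <= size al) && all (fun i => nth 0 be i <= nth 0 al i) (iota 0 (size al)).

(* Cells of alpha/beta : row i, columns j with beta_i <= j < alpha_i
   (i.e. paper columns beta_i < j+1 <= alpha_i). *)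
Definition skew_cells (al be : seq nat) : seq cell :=
  flatten [seq [seq (i, j) | j <- iota (nth 0 be i) (nth 0 al i - nth 0 be i)]
          | i <- iota 0 (size al)].

Definition is_SET (C : seq cell) (T : tableau) : Prop :=
  [/\ forall c, c \notin C -> T c = 0,
      perm_eq (map T C) (iota 1 (size C)),
      forall c d, c \in C -> d \in C -> c.1 = d.1 -> c.2 < d.2 -> T c < T d
    & forall c d, c \in C -> d \in C -> c.2 = d.2 -> c.1 < d.1 -> T c < T d].

Definition rowof (C : seq cell) (T : tableau) (k : nat) : nat :=
  (nth (0, 0) C (find (fun c => T c == k) C)).1.

Definition swap_vals (i : nat) (T : tableau) : tableau :=
  fun c => if T c == i then i.+1 else if T c == i.+1 then i else T c.

(* pi_i ; None stands for the result 0. *)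
Definition pi_op (C : seq cell) (i : nat) (T : tableau) : option tableau :=
  let r1 := rowof C T i in
  let r2 := rowof C T i.+1 in
  if r1 < r2 then Some T
  else if r2 < r1 then Some (swap_vals i T)
  else None.

Inductive SET_le (C : seq cell) : tableau -> tableau -> Prop :=
| SET_le_refl T : SET_le C T T
| SET_le_step T T1 T' i :
    1 <= i < size C -> pi_op C i T = Some T1 -> SET_le C T1 T' -> SET_le C T T'.

Definition SET_minimal (C : seq cell) (T : tableau) : Prop :=
  is_SET C T /\ forall T', is_SET C T' -> SET_le C T' T -> T' = T.

Definition SET_unique_minimal (C : seq cell) (M : tableau) : Prop :=
  SET_minimal C M /\ forall T, SET_minimal C T -> T = M.

(* alpha/beta is the disjoint sum of the nonempty cell sets As`_0, ..., As`_(k-1)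
   (As`_0 = paper's alpha^1/beta^1), with component i strictly above component j
   for i < j (so row hulls disjoint and ordered), and column hulls disjoint. *)
Definition ordered_disjoint_sum (al be : seq nat) (As : seq (seq cell)) : Prop :=
  [/\ perm_eq (flatten As) (skew_cells al be),
      all (fun A => size A != 0) As
    & forall i j, i < j < size As ->
        (forall c d, c \in nth [::] As i -> d \in nth [::] As j -> d.1 < c.1) /\
        ((forall c d, c \in nth [::] As i -> d \in nth [::] As j -> c.2 < d.2) \/
         (forall c d, c \in nth [::] As i -> d \in nth [::] As j -> d.2 < c.2))].

Definition glue (As : seq (seq cell)) (Ms : nat -> tableau) : tableau :=
  fun c => \sum_(k < size As)
             (if c \in nth [::] As k
              then Ms k c + \sum_(l < k) size (nth [::] As l) else 0).

From mathcomp Require Import all_boot zify.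
From Stdlib Require Import FunctionalExtensionality.

(* A SET T is minimal iff, whenever i+1 lies strictly above i in T, the two
   entries share a column: otherwise s_i T is again a SET, and pi_i carries it
   back to T. This criterion is local, so the glued tableau inherits it from
   the M_i. Conversely, in a minimal T the successor of an entry never lies in
   an earlier (higher) component, since distinct components share no column;
   hence T fills the components with consecutive blocks of values, and each
   block, shifted down, is a minimal SET of its component, that is, M_i. *)

Set Implicit Arguments.
Unset Strict Implicit.
Unset Printing Implicit Defensive.

Lemma uniq_size_range (s : seq nat) a b :
  uniq s -> {subset s <= [pred v | a <= v < b]} -> size s <= b - a.
Proof.
move=> us sab; rewrite -(size_iota a (b - a)); apply: uniq_leq_size => // v /sab.
by rewrite inE mem_iota; lia.
Qed.

Lemma uniq_perm_iota (s : seq nat) m : uniq s -> size s = m ->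
  {subset s <= [pred v | 1 <= v <= m]} -> perm_eq s (iota 1 m).
Proof.
move=> us size_s s1m; apply: uniq_perm; rewrite ?iota_uniq //.
have sub : {subset s <= iota 1 m} by move=> v /s1m; rewrite inE mem_iota; lia.
by have [] := uniq_min_size us sub (eq_leq (etrans (size_iota 1 m) (esym size_s))).
Qed.

Definition offset (T : Type) (ss : seq (seq T)) (k : nat) : nat :=
  \sum_(l < k) size (nth [::] ss l).

Lemma offsetS T (ss : seq (seq T)) k :
  offset ss k.+1 = offset ss k + size (nth [::] ss k).
Proof. by rewrite /offset big_ord_recr. Qed.

Lemma leq_offset T (ss : seq (seq T)) : {homo offset ss : k l / k <= l}.
Proof.
move=> k l kl; rewrite /offset (big_ord_widen l (fun i => size (nth [::] ss i)) kl) big_mkcond.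
by apply: leq_sum => i _; case: (i < k).
Qed.

Lemma size_flatten_take T (ss : seq (seq T)) k : k <= size ss ->
  size (flatten (take k ss)) = offset ss k.
Proof.
move=> kss; rewrite size_flatten /shape sumnE big_map (big_nth [::]) big_mkord size_takel //.
by apply: eq_bigr => l _; rewrite nth_take.
Qed.

Lemma size_flatten_drop T (ss : seq (seq T)) k : k <= size ss ->
  size (flatten (drop k ss)) = offset ss (size ss) - offset ss k.
Proof.
move=> kss; have := congr1 (size \o flatten) (cat_take_drop k ss).
rewrite /= flatten_cat size_cat size_flatten_take // => sizess.
by rewrite -(size_flatten_take (leqnn _)) take_size -sizess addKn.
Qed.

Lemma mem_flatten_nthP (T : eqType) (ss : seq (seq T)) c :
  reflect (exists2 k, k < size ss & c \in nth [::] ss k) (c \in flatten ss).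
Proof.
apply: (iffP flattenP) => [[A Ass cA] | [k kss ck]].
  by exists (index A ss); rewrite ?index_mem ?nth_index.
by exists (nth [::] ss k); rewrite ?mem_nth.
Qed.

Lemma mem_flatten_take (T : eqType) (ss : seq (seq T)) k c :
  c \in flatten (take k ss) -> exists2 l, l < k & c \in nth [::] ss l.
Proof.
case/mem_flatten_nthP => l; rewrite size_take_min => lk cl.
have {}lk : l < k by lia.
by exists l; rewrite // -(nth_take [::] lk).
Qed.

Lemma mem_flatten_drop (T : eqType) (ss : seq (seq T)) k c :
  c \in flatten (drop k ss) -> exists2 l, k <= l < size ss & c \in nth [::] ss l.
Proof.
case/mem_flatten_nthP => l; rewrite size_drop nth_drop => lk cl.
by exists (k + l); rewrite ?leq_addr // -ltn_subRL.
Qed.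

Lemma uniq_flatten_take (T : eqType) (ss : seq (seq T)) k :
  uniq (flatten ss) -> uniq (flatten (take k ss)).
Proof. by rewrite -{1}(cat_take_drop k ss) flatten_cat cat_uniq => /and3P[]. Qed.

Lemma uniq_flatten_drop (T : eqType) (ss : seq (seq T)) k :
  uniq (flatten ss) -> uniq (flatten (drop k ss)).
Proof. by rewrite -{1}(cat_take_drop k ss) flatten_cat cat_uniq => /and3P[]. Qed.

Lemma uniq_flatten_nth (T : eqType) (ss : seq (seq T)) k :
  uniq (flatten ss) -> uniq (nth [::] ss k).
Proof.
case: (ltnP k (size ss)) => [kss | ?]; last by rewrite nth_default.
by move=> /(uniq_flatten_drop k); rewrite (drop_nth [::] kss) cat_uniq => /and3P[].
Qed.

Definition swap_nat (i v : nat) : nat :=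
  if v == i then i.+1 else if v == i.+1 then i else v.

Lemma swap_valsE i T c : swap_vals i T c = swap_nat i (T c).
Proof. by []. Qed.

Lemma swap_natK i : involutive (swap_nat i).
Proof. by move=> v; rewrite /swap_nat; do ! case: eqP => //=; lia. Qed.

Lemma swap_valsK i : involutive (swap_vals i).
Proof. by move=> T; apply: functional_extensionality => c; rewrite !swap_valsE swap_natK. Qed.

Lemma swap_natl i : swap_nat i i = i.+1.
Proof. by rewrite /swap_nat eqxx. Qed.

Lemma swap_natr i : swap_nat i i.+1 = i.
Proof. by rewrite /swap_nat eqxx; case: eqP => //; lia. Qed.

Lemma swap_nat_id i v : v != i -> v != i.+1 -> swap_nat i v = v.
Proof. by rewrite /swap_nat => /negbTE-> /negbTE->. Qed.

Lemma swap_nat_lt i a b : a < b -> (a, b) != (i, i.+1) -> swap_nat i a < swap_nat i b.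
Proof. by rewrite /swap_nat xpair_eqE; do ! case: eqP => //=; lia. Qed.

Lemma perm_iota_swap_nat i m : 1 <= i < m ->
  perm_eq (map (swap_nat i) (iota 1 m)) (iota 1 m).
Proof.
move=> im; have swap_inj := inv_inj (swap_natK i).
apply: uniq_perm; rewrite ?map_inj_uniq ?iota_uniq // => v.
rewrite -{1}(swap_natK i v) mem_map // !mem_iota /swap_nat.
by do ! case: eqP => //=; lia.
Qed.

Section SETFacts.

Variables (C : seq cell) (T : tableau).
Hypothesis T_SET : is_SET C T.

Lemma SET_mem_iota v : (v \in map T C) = (1 <= v <= size C).
Proof. by have [_ /perm_mem-> _ _] := T_SET; rewrite mem_iota; lia. Qed.

Lemma SET_range c : c \in C -> 1 <= T c <= size C.
Proof. by move=> cC; rewrite -SET_mem_iota map_f. Qed.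

Lemma SET_surj v : 1 <= v <= size C -> exists2 c, c \in C & T c = v.
Proof. by rewrite -SET_mem_iota => /mapP[c cC ->]; exists c. Qed.

Lemma SET_inj : {in C &, injective T}.
Proof.
have [_ /perm_uniq TCu _ _] := T_SET.
have TC_uniq : uniq (map T C) by rewrite TCu iota_uniq.
move=> c d cC dC Tcd; rewrite -(nth_index (0, 0) cC) -(nth_index (0, 0) dC).
have ltC (e : cell) : e \in C -> index e C \in gtn (size (map T C)).
  by rewrite inE size_map index_mem.
congr nth; apply: (uniqP 0 TC_uniq); rewrite ?ltC //.
by rewrite !(nth_map (0, 0)) ?index_mem ?nth_index.
Qed.

Lemma rowof_SET c : c \in C -> rowof C T (T c) = c.1.
Proof.
move=> cC; have hasTc : has (fun d => T d == T c) C by apply/hasP; exists c.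
have /eqP := nth_find (0, 0) hasTc; rewrite /rowof; set d := nth _ _ _ => Td.
have dC : d \in C by rewrite mem_nth // -has_find.
by rewrite (SET_inj dC cC Td).
Qed.

Lemma SET_size_range (S : seq cell) a b : uniq S -> {subset S <= C} ->
  (forall z, z \in S -> a <= T z < b) -> size S <= b - a.
Proof.
move=> Su SC Sab; rewrite -(size_map T); apply: uniq_size_range.
  by rewrite map_inj_in_uniq // => z w /SC zC /SC wC; apply: (SET_inj zC wC).
by move=> _ /mapP[z zS ->]; apply: Sab.
Qed.

End SETFacts.

Lemma swap_vals_SET C T c d : is_SET C T -> c \in C -> d \in C -> T d = (T c).+1 ->
  c.1 != d.1 -> c.2 != d.2 -> is_SET C (swap_vals (T c) T).
Proof.
move=> T_SET cC dC Td rowcd colcd; have [T0 Tperm Trow Tcol] := T_SET.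
have Tc_range := SET_range T_SET cC; have Td_range := SET_range T_SET dC.
have swap_lt z w : z \in C -> w \in C -> z.1 = w.1 \/ z.2 = w.2 -> T z < T w ->
    swap_vals (T c) T z < swap_vals (T c) T w.
  move=> zC wC zw Tzw; rewrite !swap_valsE swap_nat_lt // xpair_eqE.
  apply/negP => /andP[/eqP Tz /eqP Tw].
  have ez := SET_inj T_SET zC cC Tz; have ew := SET_inj T_SET wC dC (etrans Tw (esym Td)).
  by move: zw; rewrite ez ew => -[] /eqP; rewrite ?(negbTE rowcd) ?(negbTE colcd).
split.
- by move=> z /T0 Tz; rewrite swap_valsE Tz swap_nat_id //; lia.
- have -> : map (swap_vals (T c) T) C = map (swap_nat (T c)) (map T C) by rewrite -map_comp.
  by apply: perm_trans (perm_map _ Tperm) _; apply: perm_iota_swap_nat; lia.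
- by move=> z w zC wC zw ltzw; apply: swap_lt => //; [left | apply: Trow].
- by move=> z w zC wC zw ltzw; apply: swap_lt => //; [right | apply: Tcol].
Qed.

Lemma pi_op_SET C T T' i : is_SET C T -> 1 <= i < size C -> pi_op C i T = Some T' ->
  is_SET C T'.
Proof.
move=> T_SET isz.
have [c cC Tc] : exists2 c, c \in C & T c = i by apply: (SET_surj T_SET); lia.
have [d dC Td] : exists2 d, d \in C & T d = i.+1 by apply: (SET_surj T_SET); lia.
subst i; rewrite /pi_op -Td !rowof_SET //.
case: ltnP => [_ [<-] // | _]; case: ltnP => // dc [<-].
apply: (swap_vals_SET T_SET cC dC Td); first by rewrite gtn_eqF.
apply/eqP => col; have [_ _ _ Tcol] := T_SET.
by have := Tcol d c dC cC (esym col) dc; rewrite Td; lia.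
Qed.

Definition vertical_ascents (C : seq cell) (T : tableau) : Prop :=
  forall c d, c \in C -> d \in C -> T d = (T c).+1 -> c.1 < d.1 -> c.2 = d.2.

Lemma SET_minimalP C T : is_SET C T -> SET_minimal C T <-> vertical_ascents C T.
Proof.
move=> T_SET; split=> [[_ T_min] c d cC dC Td cd | T_asc].
  apply/eqP; apply: contraT => colcd.
  have S_SET := swap_vals_SET T_SET cC dC Td (negbT (ltn_eqF cd)) colcd.
  set S := swap_vals (T c) T in S_SET.
  have Sd : S d = T c by rewrite /S swap_valsE Td swap_natr.
  have Sc : S c = (S d).+1 by rewrite Sd /S swap_valsE swap_natl.
  have S_le : SET_le C S T.
    apply: (SET_le_step (i := T c)) (SET_le_refl _ _).
      by have := SET_range T_SET cC; have := SET_range T_SET dC; lia.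
    rewrite /pi_op -Sd -Sc !rowof_SET // ltnNge (ltnW cd) /= cd Sd.
    by rewrite /S swap_valsK.
  by have := congr1 (fun f => f d) (T_min S S_SET S_le); rewrite Sd Td; lia.
split=> // T' T'_SET T'_le.
suff le_eq X Y : SET_le C X Y -> Y = T -> is_SET C X -> X = T by exact: le_eq T'_le erefl T'_SET.
elim=> [//|{}X X1 {}Y i isz piX _ IH] YT X_SET.
have X1T := IH YT (pi_op_SET X_SET isz piX); subst X1.
have [c cC Xc] : exists2 c, c \in C & X c = i by apply: (SET_surj X_SET); lia.
have [d dC Xd] : exists2 d, d \in C & X d = i.+1 by apply: (SET_surj X_SET); lia.
subst i; move: piX; rewrite /pi_op -Xd !rowof_SET //.
case: ltnP => [_ [] // | _]; case: ltnP => // dc [XT].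
have Td : T d = X c by rewrite -XT swap_valsE Xd swap_natr.
have Tc : T c = (T d).+1 by rewrite Td -XT swap_valsE swap_natl.
have [_ _ _ Xcol] := X_SET.
by have := Xcol d c dC cC (T_asc d c dC cC Tc dc) dc; rewrite Xd; lia.
Qed.

Lemma eq_glue As Ms Ms' : (forall k, k < size As -> Ms k = Ms' k) ->
  glue As Ms = glue As Ms'.
Proof.
by move=> eqMs; apply: functional_extensionality => c; apply: eq_bigr => k _; rewrite eqMs.
Qed.

Section Components.

Variables (As : seq (seq cell)) (C : seq cell).
Hypotheses (C_uniq : uniq C) (As_C : perm_eq (flatten As) C).

Local Notation n := (size As).
Local Notation A k := (nth [::] As k).

Hypothesis comps_above :
  forall k l c d, k < l -> l < n -> c \in A k -> d \in A l -> d.1 < c.1.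
Hypothesis comps_apart :
  forall k l c d, k < l -> l < n -> c \in A k -> d \in A l -> c.2 != d.2.

Lemma mem_compsP c : reflect (exists2 k, k < n & c \in A k) (c \in C).
Proof. by rewrite -(perm_mem As_C); apply: mem_flatten_nthP. Qed.

Lemma mem_comp k c : k < n -> c \in A k -> c \in C.
Proof. by move=> kn ck; apply/mem_compsP; exists k. Qed.

Lemma size_comps : size C = offset As n.
Proof. by rewrite -(perm_size As_C) -(size_flatten_take (leqnn n)) take_size. Qed.

Lemma flatten_comps_uniq : uniq (flatten As).
Proof. by rewrite (perm_uniq As_C). Qed.

Lemma comp_leq_of_row k l c d : k < n -> l < n -> c \in A k -> d \in A l ->
  c.1 <= d.1 -> l <= k.
Proof.
move=> kn ln ck dl cd; rewrite leqNgt; apply/negP => kl.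
by have := comps_above kl ln ck dl; rewrite ltnNge cd.
Qed.

Lemma comp_eq_of_row k l c d : k < n -> l < n -> c \in A k -> d \in A l ->
  c.1 = d.1 -> k = l.
Proof.
move=> kn ln ck dl cd; apply/eqP; rewrite eqn_leq.
by rewrite (comp_leq_of_row ln kn dl ck) ?cd // (comp_leq_of_row kn ln ck dl) ?cd.
Qed.

Lemma comp_eq_of_col k l c d : k < n -> l < n -> c \in A k -> d \in A l ->
  c.2 = d.2 -> k = l.
Proof.
move=> kn ln ck dl cd; case: (ltngtP k l) => // [kl | lk].
  by have := comps_apart kl ln ck dl; rewrite cd eqxx.
by have := comps_apart lk kn dl ck; rewrite cd eqxx.
Qed.

Lemma comp_mem_eq k l c : k < n -> l < n -> c \in A k -> c \in A l -> k = l.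
Proof. by move=> kn ln ck cl; apply: comp_eq_of_row ck cl _. Qed.

Definition blockwise (T : tableau) : Prop :=
  forall k c, k < n -> c \in A k -> offset As k < T c <= offset As k.+1.

Lemma blockwise_lt T k l c d : blockwise T -> k < l -> l < n -> c \in A k -> d \in A l ->
  T c < T d.
Proof.
move=> T_block kl ln ck dl; have kn := ltn_trans kl ln.
have := T_block k c kn ck; have := T_block l d ln dl; have := leq_offset As kl; lia.
Qed.

Lemma glueE {Ms} k c : k < n -> c \in A k -> glue As Ms c = Ms k c + offset As k.
Proof.
move=> kn ck; rewrite /glue (bigD1 (Ordinal kn)) //= ck -/(offset As k) big1 ?addn0 // => j /eqP jk.
case: ifP => // cj; case: jk; apply: val_inj.
exact: comp_mem_eq (ltn_ord j) kn cj ck.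
Qed.

Lemma glue0 {Ms} c : c \notin C -> glue As Ms c = 0.
Proof.
move=> cC; rewrite /glue big1 // => j _; case: ifP => // cj.
by case/negP: cC; apply: mem_comp cj.
Qed.

Lemma glue_blockwise Ms : (forall k, k < n -> is_SET (A k) (Ms k)) ->
  blockwise (glue As Ms).
Proof.
move=> Ms_SET k c kn ck; rewrite (glueE kn ck) offsetS.
by have := SET_range (Ms_SET k kn) ck; lia.
Qed.

Lemma glue_SET Ms : (forall k, k < n -> is_SET (A k) (Ms k)) -> is_SET C (glue As Ms).
Proof.
move=> Ms_SET; have g_block := glue_blockwise Ms_SET.
split.
- exact: glue0.
- apply: uniq_perm_iota; rewrite ?size_map //.
    rewrite map_inj_in_uniq // => c d /mem_compsP[k kn ck] /mem_compsP[l ln dl] gcd.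
    case: (ltngtP k l) => [kl | lk | kl].
    + by have := blockwise_lt g_block kl ln ck dl; rewrite gcd ltnn.
    + by have := blockwise_lt g_block lk kn dl ck; rewrite gcd ltnn.
    subst l; apply: (SET_inj (Ms_SET k kn) ck dl).
    by apply/eqP; rewrite -(eqn_add2r (offset As k)) -(glueE kn ck) -(glueE kn dl) gcd.
  move=> _ /mapP[c /mem_compsP[k kn ck] ->]; rewrite inE size_comps.
  by have := g_block k c kn ck; have := leq_offset As kn; lia.
- move=> c d /mem_compsP[k kn ck] /mem_compsP[l ln dl] cd.
  have kl := comp_eq_of_row kn ln ck dl cd; subst l.
  by rewrite (glueE kn ck) (glueE kn dl) ltn_add2r; have [_ _ Mrow _] := Ms_SET k kn; apply: Mrow.
- move=> c d /mem_compsP[k kn ck] /mem_compsP[l ln dl] cd.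
  have kl := comp_eq_of_col kn ln ck dl cd; subst l.
  by rewrite (glueE kn ck) (glueE kn dl) ltn_add2r; have [_ _ _ Mcol] := Ms_SET k kn; apply: Mcol.
Qed.

Lemma glue_minimal Ms : (forall k, k < n -> SET_minimal (A k) (Ms k)) ->
  SET_minimal C (glue As Ms).
Proof.
move=> Ms_min; have Ms_SET k (kn : k < n) := (Ms_min k kn).1.
apply/(SET_minimalP (glue_SET Ms_SET)) => c d /mem_compsP[k kn ck] /mem_compsP[l ln dl] gd cd.
have kl : k = l.
  case: (ltngtP l k) (comp_leq_of_row kn ln ck dl (ltnW cd)) => // lk _.
  by have := blockwise_lt (glue_blockwise Ms_SET) lk kn dl ck; rewrite gd; lia.
subst l; apply: ((SET_minimalP (Ms_SET k kn)).1 (Ms_min k kn) c d ck dl _ cd).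
by apply/eqP; rewrite -(eqn_add2r (offset As k)) addSn -(glueE kn ck) -(glueE kn dl) gd.
Qed.

Section MinimalTableau.

Variable T : tableau.
Hypothesis T_min : SET_minimal C T.

Let T_SET : is_SET C T := T_min.1.

Lemma minimal_comp_succ k l c d : k < n -> l < n -> c \in A k -> d \in A l ->
  T d = (T c).+1 -> k <= l.
Proof.
move=> kn ln ck dl Td; rewrite leqNgt; apply/negP => lk.
have := (SET_minimalP T_SET).1 T_min c d (mem_comp kn ck) (mem_comp ln dl) Td.
by move=> /(_ (comps_above lk kn dl ck)) cd; have := comps_apart lk kn dl ck; rewrite cd eqxx.
Qed.

Lemma minimal_comp_mono t k l c d : k < n -> l < n -> c \in A k -> d \in A l ->
  T d = T c + t -> k <= l.
Proof.
elim: t k c => [|t IH] k c kn ln ck dl Td.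
  rewrite addn0 in Td; have cd := SET_inj T_SET (mem_comp ln dl) (mem_comp kn ck) Td.
  by rewrite (comp_mem_eq kn ln ck) -?cd.
have [e eC Te] : exists2 e, e \in C & T e = (T c).+1.
  by apply: (SET_surj T_SET); have := SET_range T_SET (mem_comp ln dl); lia.
case/mem_compsP: eC => j jn ej.
apply: leq_trans (minimal_comp_succ kn jn ck ej Te) (IH j e jn ln ej dl _).
by rewrite Te Td addnS.
Qed.

Lemma minimal_comps_increasing k l c d : k < l -> l < n -> c \in A k -> d \in A l ->
  T c < T d.
Proof.
move=> kl ln ck dl; rewrite ltnNge; apply/negP => Tdc.
have := minimal_comp_mono ln (ltn_trans kl ln) dl ck (esym (subnKC Tdc)); lia.
Qed.

End MinimalTableau.

Lemma increasing_blockwise T : is_SET C T ->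
  (forall k l c d, k < l -> l < n -> c \in A k -> d \in A l -> T c < T d) -> blockwise T.
Proof.
move=> T_SET T_incr k c kn ck.
have := SET_range T_SET (mem_comp kn ck); rewrite size_comps => Tc_range.
have before : offset As k <= T c - 1.
  rewrite -size_flatten_take ?(ltnW kn) //; apply: (SET_size_range T_SET).
  - exact: uniq_flatten_take flatten_comps_uniq.
  - by move=> z /mem_flatten_take[l lk zl]; apply: mem_comp (ltn_trans lk kn) zl.
  move=> z /mem_flatten_take[l lk zl]; have ln := ltn_trans lk kn.
  have := T_incr l k z c lk kn zl ck.
  by have := SET_range T_SET (mem_comp ln zl); lia.
have after : offset As n - offset As k.+1 <= (offset As n).+1 - (T c).+1.
  rewrite -size_flatten_drop //; apply: (SET_size_range T_SET).
  - exact: uniq_flatten_drop flatten_comps_uniq.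
  - by move=> z /mem_flatten_drop[l /andP[_ ln] zl]; apply: mem_comp ln zl.
  move=> z /mem_flatten_drop[l /andP[kl ln] zl].
  have := T_incr k l c z kl ln ck zl.
  by have := SET_range T_SET (mem_comp ln zl); rewrite size_comps; lia.
by have := leq_offset As kn; lia.
Qed.

Definition unglue (T : tableau) (k : nat) : tableau :=
  fun z => if z \in A k then T z - offset As k else 0.

Lemma unglueE T k z : blockwise T -> k < n -> z \in A k -> T z = unglue T k z + offset As k.
Proof. by move=> T_block kn zk; rewrite /unglue zk; have := T_block k z kn zk; lia. Qed.

Lemma unglue_SET T k : is_SET C T -> blockwise T -> k < n -> is_SET (A k) (unglue T k).
Proof.
move=> T_SET T_block kn; have [_ _ Trow Tcol] := T_SET.
have Tk z : z \in A k -> T z = unglue T k z + offset As k by apply: unglueE.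
split.
- by move=> z /negbTE zk; rewrite /unglue zk.
- apply: uniq_perm_iota; rewrite ?size_map //.
    rewrite map_inj_in_uniq ?(uniq_flatten_nth k flatten_comps_uniq) // => z w zk wk Uzw.
    by apply: (SET_inj T_SET (mem_comp kn zk) (mem_comp kn wk)); rewrite !Tk // Uzw.
  move=> _ /mapP[z zk ->]; rewrite inE.
  by have := T_block k z kn zk; rewrite offsetS /unglue zk; lia.
- move=> z w zk wk zw zw2; rewrite -(ltn_add2r (offset As k)) -!Tk //.
  exact: Trow (mem_comp kn zk) (mem_comp kn wk) zw zw2.
- move=> z w zk wk zw zw1; rewrite -(ltn_add2r (offset As k)) -!Tk //.
  exact: Tcol (mem_comp kn zk) (mem_comp kn wk) zw zw1.
Qed.

Lemma unglue_minimal T k : SET_minimal C T -> blockwise T -> k < n ->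
  SET_minimal (A k) (unglue T k).
Proof.
move=> T_min T_block kn; have T_SET := T_min.1.
apply/(SET_minimalP (unglue_SET T_SET T_block kn)) => c d ck dk Ud cd.
apply: ((SET_minimalP T_SET).1 T_min c d (mem_comp kn ck) (mem_comp kn dk) _ cd).
by rewrite !(unglueE T_block kn) // Ud.
Qed.

Lemma unglueK T : is_SET C T -> blockwise T -> glue As (unglue T) = T.
Proof.
move=> T_SET T_block; apply: functional_extensionality => c.
case: (boolP (c \in C)) => [/mem_compsP[k kn ck] | cC]; first by rewrite (glueE kn ck) -unglueE.
by have [T0 _ _ _] := T_SET; rewrite glue0 // T0.
Qed.

Theorem glue_unique_minimal Ms :
  (forall k, k < n -> SET_unique_minimal (A k) (Ms k)) -> SET_unique_minimal C (glue As Ms).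
Proof.
move=> Ms_umin; split=> [|T T_min]; first by apply: glue_minimal => k /Ms_umin[].
have T_block := increasing_blockwise T_min.1 (minimal_comps_increasing T_min).
rewrite -(unglueK T_min.1 T_block); apply: eq_glue => k kn.
exact: (Ms_umin k kn).2 _ (unglue_minimal T_min T_block kn).
Qed.

End Components.

Lemma skew_cells_uniq al be : uniq (skew_cells al be).
Proof.
rewrite /skew_cells; apply: allpairs_uniq_dep => [|i _|]; rewrite ?iota_uniq //.
by move=> [i1 j1] [i2 j2] _ _ /= [ei ej]; subst i2; rewrite ej.
Qed.

Lemma ordered_disjoint_sum_above al be As : ordered_disjoint_sum al be As ->
  forall k l c d, k < l -> l < size As ->
    c \in nth [::] As k -> d \in nth [::] As l -> d.1 < c.1.
Proof.
move=> [_ _ sum_ord] k l c d kl ln.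
have /sum_ord[rows _] : k < l < size As by rewrite kl.
exact: rows.
Qed.

Lemma ordered_disjoint_sum_apart al be As : ordered_disjoint_sum al be As ->
  forall k l c d, k < l -> l < size As ->
    c \in nth [::] As k -> d \in nth [::] As l -> c.2 != d.2.
Proof.
move=> [_ _ sum_ord] k l c d kl ln ck dl.
have /sum_ord[_ [] cols_lt] : k < l < size As by rewrite kl.
all: by have := cols_lt c d ck dl; rewrite neq_ltn => ->; rewrite ?orbT.
Qed.

Theorem proposition5p1 (al be : seq nat) (As : seq (seq cell)) (Ms : nat -> tableau) :
  is_composition al -> is_composition be -> subcomp be al ->
  ordered_disjoint_sum al be As ->
  (forall k, k < size As -> SET_unique_minimal (nth [::] As k) (Ms k)) ->
  SET_unique_minimal (skew_cells al be) (glue As Ms).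
Proof.
move=> _ _ _ sum_As Ms_umin; have [As_C _ _] := sum_As.
exact: (glue_unique_minimal (skew_cells_uniq al be) As_C
  (ordered_disjoint_sum_above sum_As) (ordered_disjoint_sum_apart sum_As) Ms_umin).
Qed.
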